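(* Let $n\ge1$, $m\ge0$ an integer, $m^n=(m,\dots,m)$ ($n$ parts) and $x=(x_1,\dots,x_n)\in\mathbb{C}^n$. Then $$W_{m^n}(x;q,p,t,a,b)=\prod_{j=1}^{\lfloor n/2\rfloor}\frac{(qbt^{n-2j})_{2m}}{(qbt^{-1-n+2j})_{2m}}\prod_{i=1}^n\frac{(x_i^{-1})_{m}(ax_i)_{m}}{(qbx_i)_{m}(qb/(ax_i))_{m}}.$$
   Context: Fix $|p|<1$; parameters generic. $E(x)=(x;p)_\infty(p/x;p)_\infty$. For integer $m\ge0$, $(a)_m=\prod_{k=0}^{m-1}E(aq^k)$, for $m<0$, $(a)_m=1/(aq^m)_{-m}$; for a partition $\lambda$ with $n$ parts $(a)_\lambda=\prod_{i=1}^n(at^{1-i})_{\lambda_i}$; several arguments denote products; integer subscripts denote the single-integer symbol. For $n$-part partitions with $\lambda_1\ge\mu_1\ge\dots\ge\lambda_n\ge\mu_n$, $\lambda_{n+1}=\mu_{n+1}=0$, $H_{\lambda/\mu}(q,p,t,b)=\prod_{1\le i<j\le n}\Big\{\frac{(q^{\mu_i-\mu_{j-1}}t^{j-i})_{\mu_{j-1}-\lambda_j}(q^{\lambda_i+\lambda_j}t^{3-j-i}b)_{\mu_{j-1}-\lambda_j}}{(q^{\mu_i-\mu_{j-1}+1}t^{j-i-1})_{\mu_{j-1}-\lambda_j}(q^{\lambda_i+\lambda_j+1}t^{2-j-i}b)_{\mu_{j-1}-\lambda_j}}\frac{(q^{\lambda_i-\mu_{j-1}+1}t^{j-i-1})_{\mu_{j-1}-\lambda_j}}{(q^{\lambda_i-\mu_{j-1}}t^{j-i})_{\mu_{j-1}-\lambda_j}}\Big\}\prod_{1\le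 i<j-1\le n}\frac{(q^{\mu_i+\lambda_j+1}t^{1-j-i}b)_{\mu_{j-1}-\lambda_j}}{(q^{\mu_i+\lambda_j}t^{2-j-i}b)_{\mu_{j-1}-\lambda_j}}$; for $x\in\mathbb{C}$, $W_{\lambda/\mu}(x;q,p,t,a,b)=H_{\lambda/\mu}\frac{(x^{-1},ax)_\lambda(qbx/t,qb/(axt))_\mu}{(x^{-1},ax)_\mu(qbx,qb/(ax))_\lambda}\prod_{i=1}^n\frac{E(bt^{1-2i}q^{2\mu_i})}{E(bt^{1-2i})}\frac{(bt^{1-2i})_{\mu_i+\lambda_{i+1}}}{(bqt^{-2i})_{\mu_i+\lambda_{i+1}}}t^{i(\mu_i-\lambda_{i+1})}$ (zero if the interlacing fails); recursively $W_{\lambda/\mu}(y,z_1,\dots,z_\ell;q,p,t,a,b)=\sum_\nu W_{\lambda/\nu}(yt^{-\ell};q,p,t,at^{2\ell},bt^\ell)W_{\nu/\mu}(z_1,\dots,z_\ell;q,p,t,a,b)$ over $\nu$ with $\lambda_1\ge\nu_1\ge\dots\ge\lambda_n\ge\nu_n\ge0$; $W_\lambda=W_{\lambda/0}$. *)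

From Stdlib Require Import Reals List ZArith Arith Bool.
From Coquelicot Require Import Coquelicot.
Import ListNotations.

Local Open Scope C_scope.

Fixpoint Cpow (z : C) (k : nat) : C :=
  match k with O => RtoC 1 | S k' => Cmult z (Cpow z k') end.

Definition Cpowz (z : C) (k : Z) : C :=
  match k with
  | Z0 => RtoC 1
  | Zpos n => Cpow z (Pos.to_nat n)
  | Zneg n => Cinv (Cpow z (Pos.to_nat n))
  end.

Definition Cprod_list (l : list C) : C := fold_right Cmult (RtoC 1) l.
Definition Csum_list (l : list C) : C := fold_right Cplus (RtoC 0) l.

Definition qp_partial (x p : C) (N : nat) : C :=
  Cprod_list (map (fun k => Cminus (RtoC 1) (Cmult x (Cpow p k))) (seq 0 N)).

Definition qp_inf (x p : C) : C :=
  (real (Lim_seq (fun N => fst (qp_partial x p N))),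
   real (Lim_seq (fun N => snd (qp_partial x p N)))).

Definition Etheta (p x : C) : C := qp_inf x p * qp_inf (p / x) p.

Definition epoch (p q a : C) (m : Z) : C :=
  match m with
  | Z0 => RtoC 1
  | Zpos k => Cprod_list (map (fun j => Etheta p (a * Cpow q j)) (seq 0 (Pos.to_nat k)))
  | Zneg k => Cinv (Cprod_list
                 (map (fun j => Etheta p (a * Cpowz q m * Cpow q j)) (seq 0 (Pos.to_nat k))))
  end.

(** i-th part (1-based) of a partition given as a list; 0 beyond the length *)
Definition part (lam : list nat) (i : nat) : Z := Z.of_nat (nth (i - 1) lam 0%nat).

Definition epoch_part (p q t a : C) (lam : list nat) : C :=
  Cprod_list (map (fun i => epoch p q (a * Cpowz t (1 - Z.of_nat i)%Z) (part lam i))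
                  (seq 1 (length lam))).

Definition interlaceb (lam mu : list nat) : bool :=
  andb (length mu =? length lam)%nat
  (forallb (fun i => andb (part lam (i + 1) <=? part mu i)%Z (part mu i <=? part lam i)%Z)
          (seq 1 (length lam))).

Definition Hfac (p q t b : C) (lam mu : list nat) : C :=
  let n := length lam in
  let L := part lam in
  let M := part mu in
  let e := epoch p q in
  Cprod_list (flat_map (fun i => map (fun j =>
     let zi := Z.of_nat i in let zj := Z.of_nat j in
     let d := (M (j - 1)%nat - L j)%Z in
     (e (Cpowz q (M i - M (j - 1)%nat)%Z * Cpowz t (zj - zi)%Z) d
      * e (Cpowz q (L i + L j)%Z * Cpowz t (3 - zj - zi)%Z * b) d)
     / (e (Cpowz q (M i - M (j - 1)%nat + 1)%Z * Cpowz t (zj - zi - 1)%Z) d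
        * e (Cpowz q (L i + L j + 1)%Z * Cpowz t (2 - zj - zi)%Z * b) d)
     * (e (Cpowz q (L i - M (j - 1)%nat + 1)%Z * Cpowz t (zj - zi - 1)%Z) d
        / e (Cpowz q (L i - M (j - 1)%nat)%Z * Cpowz t (zj - zi)%Z) d))
   (seq (i + 1) (n - i))) (seq 1 n))
  * Cprod_list (flat_map (fun i => map (fun j =>
     let zi := Z.of_nat i in let zj := Z.of_nat j in
     let d := (M (j - 1)%nat - L j)%Z in
     e (Cpowz q (M i + L j + 1)%Z * Cpowz t (1 - zj - zi)%Z * b) d
     / e (Cpowz q (M i + L j)%Z * Cpowz t (2 - zj - zi)%Z * b) d)
   (seq (i + 2) (n - i))) (seq 1 n)).

Definition W1 (p q t a b : C) (lam mu : list nat) (x : C) : C :=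
  if interlaceb lam mu then
    let n := length lam in
    let ep := epoch_part p q t in
    Hfac p q t b lam mu
    * (ep (/ x) lam * ep (a * x) lam * ep (q * b * x / t) mu * ep (q * b / (a * x * t)) mu)
    / (ep (/ x) mu * ep (a * x) mu * ep (q * b * x) lam * ep (q * b / (a * x)) lam)
    * Cprod_list (map (fun i =>
        let zi := Z.of_nat i in
        let s := (part mu i + part lam (i + 1))%Z in
        Etheta p (b * Cpowz t (1 - 2 * zi)%Z * Cpowz q (2 * part mu i)%Z)
        / Etheta p (b * Cpowz t (1 - 2 * zi)%Z)
        * (epoch p q (b * Cpowz t (1 - 2 * zi)%Z) s
           / epoch p q (b * q * Cpowz t (- 2 * zi)%Z) s)
        * Cpowz t (zi * (part mu i - part lam (i + 1)))%Z)
      (seq 1 n))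
  else RtoC 0.

Definition candidates (lam : list nat) : list (list nat) :=
  fold_right (fun l acc => flat_map (fun v => map (cons v) acc) (seq 0 (S l))) [[]] lam.

Definition interl (lam : list nat) : list (list nat) :=
  filter (fun nu => interlaceb lam nu) (candidates lam).

Fixpoint Wm (p q t : C) (lam mu : list nat) (xs : list C) (a b : C) {struct xs} : C :=
  match xs with
  | [] => if list_eq_dec Nat.eq_dec lam mu then RtoC 1 else RtoC 0
  | y :: zs =>
      let l := Z.of_nat (length zs) in
      Csum_list (map (fun nu =>
         W1 p q t (a * Cpowz t (2 * l)%Z) (b * Cpowz t l) lam nu (y * Cpowz t (- l)%Z)
         * Wm p q t nu mu zs a b) (interl lam))
  end.

Definition Wpart (p q t : C) (lam : list nat) (xs : list C) (a b : C) : C :=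
  Wm p q t lam (repeat 0%nat (length lam)) xs a b.

Definition monomial (q t a b : C) (xs : list C) (i j k l : Z) (s : list Z) : C :=
  Cpowz q i * Cpowz t j * Cpowz a k * Cpowz b l
  * Cprod_list (map (fun xz => Cpowz (fst xz) (snd xz)) (combine xs s)).

Definition generic (p q t a b : C) (xs : list C) : Prop :=
  q <> RtoC 0 /\ t <> RtoC 0 /\ a <> RtoC 0 /\ b <> RtoC 0 /\
  List.Forall (fun x => x <> RtoC 0) xs /\
  forall (i j k l : Z) (s : list Z), length s = length xs ->
    ~ (i = 0%Z /\ j = 0%Z /\ k = 0%Z /\ l = 0%Z /\ List.Forall (fun z => z = 0%Z) s) ->
    Etheta p (monomial q t a b xs i j k l s) <> RtoC 0.

Definition rhs7 (p q t a b : C) (n m : nat) (xs : list C) : C :=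
  let zn := Z.of_nat n in let zm := Z.of_nat m in
  Cprod_list (map (fun j => let zj := Z.of_nat j in
      epoch p q (q * b * Cpowz t (zn - 2 * zj)%Z) (2 * zm)%Z
      / epoch p q (q * b * Cpowz t (-1 - zn + 2 * zj)%Z) (2 * zm)%Z)
    (seq 1 (Nat.div2 n)))
  * Cprod_list (map (fun x =>
      epoch p q (/ x) zm * epoch p q (a * x) zm
      / (epoch p q (q * b * x) zm * epoch p q (q * b / (a * x)) zm)) xs).

From Pilot Require Import Defs.
From Stdlib Require Import Reals List ZArith Bool Lia FinFun.
From Coquelicot Require Import Coquelicot.
(* Coquelicot also defines [Cpow]; re-importing [Defs] makes [Cpow] the one of the statement. *)
Import Defs.
Open Scope C_scope.

(* Branching [W_{m^n}(x_1, ..., x_n)] one variable at a time gives a sum over chains of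
   interlacing partitions.  A partition with a nonzero part beyond the number of remaining
   variables contributes nothing, and the only partition interlacing [(m^k, 0^(n-k))] whose
   [k]-th part vanishes is [(m^(k-1), 0^(n-k+1))], so exactly one chain survives.  Along it
   every factor of [H] is empty, and the one-variable factor of the step from [m^(k-1)] to
   [m^k] is the factor of its variable on the right-hand side times
   [prod_(1<=i<k) (q b t^(k-2i))_(2m) / (q b t^(k-1-2i))_(2m)].  The
   product of two consecutive such ratios collapses to
   [(q b t^k)_(2m) / (q b t^(-1-k))_(2m)], which yields the product over [j <= n/2]. *)

Lemma Cpow_add (z : C) (u v : nat) : Cpow z (u + v) = Cpow z u * Cpow z v.
Proof. induction u as [|u IH]; simpl; [ring | rewrite IH; ring]. Qed.

Lemma Cpow_neq_0 (z : C) (u : nat) : z <> 0 -> Cpow z u <> 0.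
Proof. intros Hz; induction u; simpl; [exact C1_nz | now apply Cmult_neq_0]. Qed.

Lemma Cinv_neq_0 (z : C) : z <> 0 -> / z <> 0.
Proof. intros Hz E. apply C1_nz. rewrite <- (Cinv_l z Hz), E. ring. Qed.

Lemma Cpowz_of_nat (z : C) (u : nat) : Cpowz z (Z.of_nat u) = Cpow z u.
Proof. destruct u; [reflexivity|]. simpl. now rewrite SuccNat2Pos.id_succ. Qed.

Lemma Cpowz_sub_of_nat (z : C) (u v : nat) : z <> 0 ->
  Cpowz z (Z.of_nat u - Z.of_nat v) = Cpow z u / Cpow z v.
Proof.
  intros Hz. destruct (le_lt_dec v u) as [H|H].
  - replace u with (v + (u - v))%nat by lia.
    replace (Z.of_nat (v + (u - v)) - Z.of_nat v)%Z with (Z.of_nat (u - v)) by lia.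
    rewrite Cpowz_of_nat, Cpow_add. field. now apply Cpow_neq_0.
  - replace v with (u + S (v - u - 1))%nat by lia.
    replace (Z.of_nat u - Z.of_nat (u + S (v - u - 1)))%Z
      with (Zneg (Pos.of_succ_nat (v - u - 1))) by lia.
    simpl Cpowz. rewrite SuccNat2Pos.id_succ, Cpow_add.
    field. split; now apply Cpow_neq_0.
Qed.

Lemma Z_sub_of_nat_to_nat (w : Z) : w = (Z.of_nat (Z.to_nat w) - Z.of_nat (Z.to_nat (- w)))%Z.
Proof. lia. Qed.

Lemma Cpowz_neq_0 (z : C) (u : Z) : z <> 0 -> Cpowz z u <> 0.
Proof.
  intros Hz. rewrite (Z_sub_of_nat_to_nat u), Cpowz_sub_of_nat by exact Hz.
  apply Cmult_neq_0; [|apply Cinv_neq_0]; now apply Cpow_neq_0.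
Qed.

Lemma Cpowz_add (z : C) (u v : Z) : z <> 0 -> Cpowz z (u + v) = Cpowz z u * Cpowz z v.
Proof.
  intros Hz. rewrite (Z_sub_of_nat_to_nat u), (Z_sub_of_nat_to_nat v).
  set (u1 := Z.to_nat u); set (u2 := Z.to_nat (- u)).
  set (v1 := Z.to_nat v); set (v2 := Z.to_nat (- v)).
  replace (Z.of_nat u1 - Z.of_nat u2 + (Z.of_nat v1 - Z.of_nat v2))%Z
    with (Z.of_nat (u1 + v1) - Z.of_nat (u2 + v2))%Z by lia.
  rewrite !Cpowz_sub_of_nat, !Cpow_add by exact Hz.
  field. split; now apply Cpow_neq_0.
Qed.

Lemma Cpowz_opp (z : C) (u : Z) : z <> 0 -> Cpowz z (- u) = / Cpowz z u.
Proof.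
  intros Hz. assert (Hu := Cpowz_neq_0 z u Hz).
  replace (Cpowz z (- u)) with (/ Cpowz z u * (Cpowz z u * Cpowz z (- u))) by (field; exact Hu).
  rewrite <- Cpowz_add, Z.add_opp_diag_r by exact Hz. simpl. field. exact Hu.
Qed.

Lemma Cprod_list_app (l1 l2 : list C) : Cprod_list (l1 ++ l2) = Cprod_list l1 * Cprod_list l2.
Proof. induction l1 as [|x l1 IH]; simpl; [ring | rewrite IH; ring]. Qed.

Lemma Cprod_map_seq_S {A : nat -> C} (s k : nat) :
  Cprod_list (map A (seq s (S k))) = Cprod_list (map A (seq s k)) * A (s + k)%nat.
Proof. rewrite seq_S, map_app, Cprod_list_app. simpl. ring. Qed.

Lemma Cprod_map_seq_S_l {A : nat -> C} (s k : nat) :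
  Cprod_list (map A (seq s (S k))) = A s * Cprod_list (map A (seq (S s) k)).
Proof. reflexivity. Qed.

Lemma Cprod_list_eq_1 (l : list C) : (forall x, In x l -> x = 1) -> Cprod_list l = 1.
Proof.
  induction l as [|x l IH]; simpl; intros H; [reflexivity|].
  rewrite (H x), IH by auto. ring.
Qed.

Lemma Cprod_list_neq_0 (l : list C) : (forall x, In x l -> x <> 0) -> Cprod_list l <> 0.
Proof. induction l; simpl; intros H; [exact C1_nz | apply Cmult_neq_0; auto]. Qed.

Lemma Cprod_map_neq_0 {A : Type} (f : A -> C) (l : list A) :
  (forall i, In i l -> f i <> 0) -> Cprod_list (map f l) <> 0.
Proof.
  intros H. apply Cprod_list_neq_0. intros x Hx.
  apply in_map_iff in Hx. destruct Hx as [i [<- Hi]]. auto.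
Qed.

Lemma Cprod_map_div {A : Type} (f g : A -> C) (l : list A) : (forall i, In i l -> g i <> 0) ->
  Cprod_list (map (fun i => f i / g i) l) = Cprod_list (map f l) / Cprod_list (map g l).
Proof.
  induction l as [|i l IH]; simpl; intros H; [field; exact C1_nz|].
  rewrite IH by auto. field. split; [apply Cprod_map_neq_0|]; auto.
Qed.

Lemma Csum_list_eq_0 (l : list C) : (forall x, In x l -> x = 0) -> Csum_list l = 0.
Proof.
  induction l as [|x l IH]; simpl; intros H; [reflexivity|].
  rewrite (H x), IH by auto. ring.
Qed.

Lemma Csum_map_single {A : Type} (F : A -> C) (l : list A) (i0 : A) : NoDup l -> In i0 l ->
  (forall i, In i l -> i <> i0 -> F i = 0) -> Csum_list (map F l) = F i0.
Proof.
  induction l as [|i l IH]; simpl; intros Hd Hin H; [contradiction|].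
  inversion Hd as [|? ? Hi Hd']; subst. destruct Hin as [<-|Hin].
  - rewrite Csum_list_eq_0; [ring|]. intros z Hz. apply in_map_iff in Hz.
    destruct Hz as [j [<- Hj]]. apply H; auto. intros ->. contradiction.
  - rewrite H, IH; auto; [ring|]. intros ->. contradiction.
Qed.

Section EllipticFactorial.
Variables p q : C.

Definition epochN (c : C) (N : nat) : C :=
  Cprod_list (map (fun j => Etheta p (c * Cpow q j)) (seq 0 N)).

Lemma epoch_of_nat (c : C) (N : nat) : epoch p q c (Z.of_nat N) = epochN c N.
Proof. destruct N; [reflexivity|]. simpl. now rewrite SuccNat2Pos.id_succ. Qed.

Lemma epochN_S (c : C) (N : nat) : epochN c (S N) = epochN c N * Etheta p (c * Cpow q N).
Proof. unfold epochN. now rewrite Cprod_map_seq_S. Qed.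

Lemma epochN_S_l (c : C) (N : nat) : epochN c (S N) = Etheta p c * epochN (c * q) N.
Proof.
  unfold epochN. rewrite Cprod_map_seq_S_l, <- seq_shift, map_map. simpl.
  rewrite Cmult_1_r. f_equal. f_equal. apply map_ext. intros j. simpl. f_equal. ring.
Qed.

Lemma epochN_shift (c : C) (N : nat) : Etheta p c <> 0 ->
  Etheta p (c * Cpow q N) / Etheta p c * epochN c N = epochN (c * q) N.
Proof.
  intros H. replace (epochN (c * q) N) with (/ Etheta p c * epochN c (S N))
    by (rewrite epochN_S_l; field; exact H).
  rewrite epochN_S. field. exact H.
Qed.

Lemma epochN_neq_0 (c : C) (N : nat) :
  (forall j, Etheta p (c * Cpow q j) <> 0) -> epochN c N <> 0.
Proof. intros H. apply Cprod_map_neq_0. auto. Qed.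

End EllipticFactorial.

Section Monomials.
Variables p q t a b : C.
Hypotheses (Hq : q <> 0) (Ht : t <> 0) (Ha : a <> 0) (Hb : b <> 0).
Variable y : C.
Hypothesis Hy : y <> 0.

Definition is_monomial (l s : Z) (c : C) : Prop := exists i j k,
  c = Cpowz q i * Cpowz t j * Cpowz a k * Cpowz b l * Cpowz y s.

Definition generic_at : Prop := forall l s c,
  is_monomial l s c -> (l <> 0 \/ s <> 0)%Z -> Etheta p c <> 0.

Lemma is_monomial_mul l1 s1 c1 l2 s2 c2 : is_monomial l1 s1 c1 -> is_monomial l2 s2 c2 ->
  is_monomial (l1 + l2) (s1 + s2) (c1 * c2).
Proof.
  intros [i1 [j1 [k1 ->]]] [i2 [j2 [k2 ->]]]. exists (i1 + i2)%Z, (j1 + j2)%Z, (k1 + k2)%Z.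
  rewrite !Cpowz_add by auto. ring.
Qed.

Lemma is_monomial_inv l s c : is_monomial l s c -> is_monomial (- l) (- s) (/ c).
Proof.
  intros [i [j [k ->]]]. exists (- i)%Z, (- j)%Z, (- k)%Z. rewrite !Cpowz_opp by auto.
  field. repeat split; apply Cpowz_neq_0; auto.
Qed.

Lemma is_monomial_powt (u : Z) : is_monomial 0 0 (Cpowz t u).
Proof. exists 0%Z, u, 0%Z. simpl. ring. Qed.

Lemma is_monomial_Cpowq (u : nat) : is_monomial 0 0 (Cpow q u).
Proof. exists (Z.of_nat u), 0%Z, 0%Z. rewrite Cpowz_of_nat. simpl. ring. Qed.

Lemma is_monomial_q : is_monomial 0 0 q.
Proof. exists 1%Z, 0%Z, 0%Z. simpl. ring. Qed.

Lemma is_monomial_t : is_monomial 0 0 t.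
Proof. exists 0%Z, 1%Z, 0%Z. simpl. ring. Qed.

Lemma is_monomial_a : is_monomial 0 0 a.
Proof. exists 0%Z, 0%Z, 1%Z. simpl. ring. Qed.

Lemma is_monomial_b : is_monomial 1 0 b.
Proof. exists 0%Z, 0%Z, 0%Z. simpl. ring. Qed.

Lemma is_monomial_y : is_monomial 0 1 y.
Proof. exists 0%Z, 0%Z, 0%Z. simpl. ring. Qed.

End Monomials.

Ltac solve_monomial := repeat first
  [ apply is_monomial_q | apply is_monomial_t | apply is_monomial_a | apply is_monomial_b
  | apply is_monomial_y | apply is_monomial_powt | apply is_monomial_Cpowq
  | eapply is_monomial_mul | eapply is_monomial_inv
  | assumption ].

Lemma interlacebP (lam nu : list nat) : interlaceb lam nu = true <->
  length nu = length lam /\ forall i, (1 <= i <= length lam)%nat ->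
  (part lam (i + 1) <= part nu i <= part lam i)%Z.
Proof.
  unfold interlaceb. rewrite andb_true_iff, Nat.eqb_eq, forallb_forall.
  split; intros [Hl H]; split; auto; intros i Hi.
  - specialize (H i). rewrite in_seq, andb_true_iff, !Z.leb_le in H. apply H. lia.
  - rewrite in_seq in Hi. rewrite andb_true_iff, !Z.leb_le. apply H. lia.
Qed.

Lemma in_candidates (lam nu : list nat) : length nu = length lam ->
  (forall i, nth i nu 0 <= nth i lam 0)%nat -> In nu (candidates lam).
Proof.
  revert nu. induction lam as [|l lam IH]; intros [|v nu] Hl Hi; try discriminate.
  - now left.
  - apply in_flat_map. exists v. split.
    + apply in_seq. specialize (Hi 0%nat). simpl in Hi. lia.
    + apply in_map, IH; [simpl in Hl; lia | intros i; apply (Hi (S i))].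
Qed.

Lemma NoDup_candidates (lam : list nat) : NoDup (candidates lam).
Proof.
  induction lam as [|l lam IH]; [repeat constructor; easy|].
  change (candidates (l :: lam))
    with (flat_map (fun v => map (cons v) (candidates lam)) (seq 0 (S l))).
  induction (seq_NoDup (S l) 0) as [|v vs Hv Hvs IHv]; simpl; [constructor|].
  apply NoDup_app; auto.
  - apply Injective_map_NoDup; auto. intros u w H. now injection H.
  - intros w Hw Hw'. apply in_map_iff in Hw. destruct Hw as [u [<- _]].
    apply in_flat_map in Hw'. destruct Hw' as [v' [Hv' Hu]]. apply in_map_iff in Hu.
    destruct Hu as [u' [E _]]. injection E as <- _. contradiction.
Qed.

(* A branching step moves a nonzero part [nu_j] at most one place up ([nu'_{j-1} >= nu_j]),
   so with fewer than [j] variables some part is still nonzero when the empty branching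
   [W_{nu/0}() = [nu = 0]] is reached. *)
Lemma Wm_long_partition_eq_0 (p q t : C) (N : nat) (zs : list C) : forall nu a b j,
  (length zs < j)%nat -> (0 < nth (j - 1) nu 0)%nat -> Wm p q t nu (repeat 0%nat N) zs a b = 0.
Proof.
  induction zs as [|y zs IH]; intros nu a b j Hj Hnu; cbn [Wm].
  - destruct (list_eq_dec Nat.eq_dec nu (repeat 0%nat N)) as [->|]; [|reflexivity].
    destruct (lt_dec (j - 1) N).
    + rewrite nth_repeat_lt in Hnu by lia. lia.
    + rewrite nth_overflow in Hnu by (rewrite repeat_length; lia). lia.
  - apply Csum_list_eq_0. intros x Hx. apply in_map_iff in Hx.
    destruct Hx as [nu' [<- Hnu']]. apply filter_In in Hnu'.
    destruct Hnu' as [_ [Hlen Hi]%interlacebP]. simpl in Hj.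
    assert (j - 1 < length nu)%nat.
    { destruct (le_lt_dec (length nu) (j - 1)); auto. rewrite nth_overflow in Hnu; lia. }
    specialize (Hi (j - 1)%nat ltac:(lia)). unfold part in Hi.
    replace (j - 1 + 1 - 1)%nat with (j - 1)%nat in Hi by lia.
    rewrite (IH nu' _ _ (j - 1)%nat); [ring | lia | lia].
Qed.

Section Rectangles.
Variables m n : nat.

Definition rect (k : nat) : list nat := repeat m k ++ repeat 0%nat (n - k).

Lemma length_rect (k : nat) : (k <= n)%nat -> length (rect k) = n.
Proof. intros. unfold rect. rewrite length_app, !repeat_length. lia. Qed.

Lemma rect_full : rect n = repeat m n.
Proof. unfold rect. now rewrite Nat.sub_diag, app_nil_r. Qed.

Lemma rect_0 : rect 0 = repeat 0%nat n.
Proof. unfold rect. now rewrite Nat.sub_0_r. Qed.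

Lemma nth_rect (k i : nat) : nth i (rect k) 0%nat = if (i <? k)%nat then m else 0%nat.
Proof.
  unfold rect. destruct (Nat.ltb_spec i k).
  - rewrite app_nth1 by (rewrite repeat_length; lia). now apply nth_repeat_lt.
  - rewrite app_nth2 by (rewrite repeat_length; lia).
    destruct (lt_dec (i - length (repeat m k)) (n - k));
      [apply nth_repeat_lt | apply nth_overflow; rewrite repeat_length]; lia.
Qed.

Lemma part_rect (k i : nat) : (1 <= i)%nat ->
  part (rect k) i = if (i <=? k)%nat then Z.of_nat m else 0%Z.
Proof.
  intros. unfold part. rewrite nth_rect.
  destruct (Nat.ltb_spec (i - 1) k), (Nat.leb_spec i k); try lia; reflexivity.
Qed.

Lemma interlace_rect (k : nat) : (k < n)%nat -> interlaceb (rect (S k)) (rect k) = true.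
Proof.
  intros Hk. apply interlacebP. rewrite !length_rect by lia. split; [reflexivity|].
  intros i Hi. rewrite !part_rect by lia.
  destruct (Nat.leb_spec (i + 1) (S k)), (Nat.leb_spec i k), (Nat.leb_spec i (S k)); lia.
Qed.

Lemma interlace_rect_inv (k : nat) (nu : list nat) : (k < n)%nat ->
  interlaceb (rect (S k)) nu = true -> nth k nu 0%nat = 0%nat -> nu = rect k.
Proof.
  intros Hk [Hl Hi]%interlacebP Hnu. rewrite length_rect in * by lia.
  apply nth_ext with 0%nat 0%nat; [rewrite length_rect; lia|].
  intros i Hin. rewrite nth_rect. specialize (Hi (S i) ltac:(lia)).
  rewrite !part_rect in Hi by lia. unfold part in Hi. replace (S i - 1)%nat with i in Hi by lia.
  destruct (Nat.eq_dec i k) as [->|]; [now rewrite Nat.ltb_irrefl|].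
  destruct (Nat.ltb_spec i k), (Nat.leb_spec (S i + 1) (S k)), (Nat.leb_spec (S i) (S k)); lia.
Qed.

(* The only [nu] interlacing with [rect (S k)] whose [W_{nu/0}] in [k] variables survives is [rect k]. *)
Lemma Wm_rect_cons (p q t y a b : C) (zs : list C) : let k := length zs in (k < n)%nat ->
  Wm p q t (rect (S k)) (repeat 0%nat n) (y :: zs) a b =
  W1 p q t (a * Cpowz t (2 * Z.of_nat k)) (b * Cpowz t (Z.of_nat k)) (rect (S k)) (rect k)
     (y * Cpowz t (- Z.of_nat k))
  * Wm p q t (rect k) (repeat 0%nat n) zs a b.
Proof.
  intros k Hk. cbn [Wm]. fold k.
  apply (Csum_map_single (fun nu =>
    W1 p q t (a * Cpowz t (2 * Z.of_nat k)) (b * Cpowz t (Z.of_nat k)) (rect (S k)) nu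
       (y * Cpowz t (- Z.of_nat k)) * Wm p q t nu (repeat 0%nat n) zs a b)).
  - apply NoDup_filter, NoDup_candidates.
  - apply filter_In. split; [|now apply interlace_rect].
    apply in_candidates; [rewrite !length_rect; lia|].
    intros i. rewrite !nth_rect. destruct (Nat.ltb_spec i k), (Nat.ltb_spec i (S k)); lia.
  - intros nu [_ Hnu]%filter_In Hne.
    rewrite (Wm_long_partition_eq_0 p q t n zs nu a b (S k)); [ring | lia|].
    replace (S k - 1)%nat with k by lia.
    destruct (Nat.eq_dec (nth k nu 0%nat) 0%nat); [|lia].
    exfalso. now apply Hne, interlace_rect_inv.
Qed.

End Rectangles.

Section Telescoping.
Variables p q t b : C.
Variable m : nat.

Definition bterm (e : Z) : C := epochN p q (q * b * Cpowz t e) (m + m).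

Definition step_num (k : nat) : C :=
  Cprod_list (map (fun i => bterm (Z.of_nat k - 2 * Z.of_nat i)) (seq 1 (k - 1))).

Definition step_den (k : nat) : C :=
  Cprod_list (map (fun i => bterm (Z.of_nat k - 1 - 2 * Z.of_nat i)) (seq 1 (k - 1))).

Definition step_ratio (k : nat) : C :=
  Cprod_list (map (fun i => bterm (Z.of_nat k - 2 * Z.of_nat i)
                            / bterm (Z.of_nat k - 1 - 2 * Z.of_nat i)) (seq 1 (k - 1))).

Definition half_ratio (k : nat) : C :=
  Cprod_list (map (fun j => bterm (Z.of_nat k - 2 * Z.of_nat j)
                            / bterm (-1 - Z.of_nat k + 2 * Z.of_nat j)) (seq 1 (Nat.div2 k))).

Hypothesis Hbterm : forall e, bterm e <> 0.

Lemma step_ratio_eq (k : nat) : step_ratio k = step_num k / step_den k.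
Proof. apply Cprod_map_div. auto. Qed.

Lemma step_num_neq_0 (k : nat) : step_num k <> 0.
Proof. apply Cprod_map_neq_0. auto. Qed.

Lemma step_den_S (k : nat) : (1 <= k)%nat -> step_den (S k) = step_num k * bterm (- Z.of_nat k).
Proof.
  intros Hk. unfold step_den, step_num. destruct k as [|k]; [lia|].
  replace (S (S k) - 1)%nat with (S k) by lia. replace (S k - 1)%nat with k by lia.
  rewrite Cprod_map_seq_S. f_equal.
  - f_equal. apply map_ext. intros i. f_equal. lia.
  - f_equal. lia.
Qed.

Lemma step_num_SS (k : nat) : (1 <= k)%nat ->
  step_num (S (S k)) = bterm (Z.of_nat k) * step_num k * bterm (- Z.of_nat k).
Proof.
  intros Hk. unfold step_num. destruct k as [|k]; [lia|].
  replace (S (S (S k)) - 1)%nat with (S (S k)) by lia. replace (S k - 1)%nat with k by lia.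
  rewrite Cprod_map_seq_S_l, Cprod_map_seq_S, <- seq_shift, map_map, <- Cmult_assoc.
  f_equal; [f_equal; lia|]. f_equal.
  - f_equal. apply map_ext. intros i. f_equal. lia.
  - f_equal. lia.
Qed.

(* All inner factors of the two consecutive ratios cancel. *)
Lemma step_ratio_pair (k : nat) :
  step_ratio (S k) * step_ratio (S (S k)) = bterm (Z.of_nat k) / bterm (-1 - Z.of_nat k).
Proof.
  destruct k as [|k].
  - unfold step_ratio. cbn [seq map Nat.sub Cprod_list fold_right].
    replace (Z.of_nat 2 - 2 * Z.of_nat 1)%Z with (Z.of_nat 0) by lia.
    replace (Z.of_nat 2 - 1 - 2 * Z.of_nat 1)%Z with (-1 - Z.of_nat 0)%Z by lia.
    field. auto.
  - rewrite !step_ratio_eq, (step_den_S (S k)), (step_den_S (S (S k))), (step_num_SS (S k)) by lia.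
    replace (-1 - Z.of_nat (S k))%Z with (- Z.of_nat (S (S k)))%Z by lia.
    field. repeat split; auto using step_num_neq_0.
Qed.

Lemma half_ratio_SS (k : nat) :
  half_ratio (S (S k)) = bterm (Z.of_nat k) / bterm (-1 - Z.of_nat k) * half_ratio k.
Proof.
  unfold half_ratio. cbn [Nat.div2]. rewrite Cprod_map_seq_S_l, <- seq_shift, map_map.
  f_equal; [f_equal; f_equal; lia|]. f_equal. apply map_ext. intros j. f_equal; f_equal; lia.
Qed.

Lemma prod_step_ratio (k : nat) : Cprod_list (map step_ratio (seq 1 k)) = half_ratio k.
Proof.
  induction k as [k IH] using lt_wf_ind. destruct k as [|[|k]].
  { reflexivity. }
  { unfold step_ratio, half_ratio. simpl. ring. }
  rewrite !Cprod_map_seq_S, IH, half_ratio_SS by lia.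
  replace (1 + k)%nat with (S k) by lia. replace (1 + S k)%nat with (S (S k)) by lia.
  rewrite <- Cmult_assoc, step_ratio_pair. ring.
Qed.

End Telescoping.

Section RectangularSteps.
Variables p q t a b : C.
Variables m n : nat.
Hypotheses (Hq : q <> 0) (Ht : t <> 0) (Ha : a <> 0) (Hb : b <> 0).

Local Notation rect := (rect m n).

(* Every factor of [H] has length [mu_{j-1} - lambda_j], which is [0] between consecutive
   rectangles. *)
Lemma Hfac_rect (B : C) (l : nat) : (l < n)%nat -> Hfac p q t B (rect (S l)) (rect l) = 1.
Proof.
  intros Hl. unfold Hfac. cbv zeta. rewrite length_rect by lia.
  assert (Hd : forall j, (2 <= j)%nat -> (part (rect l) (j - 1) - part (rect (S l)) j = 0)%Z).
  { intros j Hj. rewrite !part_rect by lia.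
    destruct (Nat.leb_spec (j - 1) l), (Nat.leb_spec j (S l)); lia. }
  rewrite !Cprod_list_eq_1; [ring| |];
    intros x Hx; apply in_flat_map in Hx; destruct Hx as [i [Hi Hx]];
    apply in_map_iff in Hx; destruct Hx as [j [<- Hj]]; apply in_seq in Hi, Hj;
    rewrite Hd by lia; cbn [epoch]; field.
Qed.

Definition epoch_rect (c : C) (k : nat) : C :=
  Cprod_list (map (fun i => epochN p q (c * Cpowz t (1 - Z.of_nat i)) m) (seq 1 k)).

Lemma epoch_part_rect (c : C) (k : nat) : (k <= n)%nat -> epoch_part p q t c (rect k) = epoch_rect c k.
Proof.
  intros Hk. unfold epoch_part, epoch_rect. rewrite length_rect by lia.
  replace n with (k + (n - k))%nat at 1 by lia. rewrite seq_app, map_app, Cprod_list_app.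
  rewrite (Cprod_list_eq_1 (map _ (seq (1 + k) _))).
  - rewrite Cmult_1_r. f_equal. apply map_ext_in. intros i Hi. apply in_seq in Hi.
    rewrite part_rect, (proj2 (Nat.leb_le i k)) by lia. apply epoch_of_nat.
  - intros x Hx. apply in_map_iff in Hx. destruct Hx as [i [<- Hi]]. apply in_seq in Hi.
    rewrite part_rect, (proj2 (Nat.leb_gt i k)) by lia. reflexivity.
Qed.

Lemma epoch_rect_S (c : C) (k : nat) :
  epoch_rect c (S k) = epoch_rect c k * epochN p q (c * Cpowz t (- Z.of_nat k)) m.
Proof.
  unfold epoch_rect. rewrite Cprod_map_seq_S.
  replace (1 - Z.of_nat (1 + k))%Z with (- Z.of_nat k)%Z by lia. reflexivity.
Qed.

Lemma epoch_rect_S_l (c c' : C) (k : nat) : c' * t = c ->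
  epoch_rect c (S k) = epochN p q c m * epoch_rect c' k.
Proof.
  intros <-. unfold epoch_rect. rewrite Cprod_map_seq_S_l, <- seq_shift, map_map.
  f_equal; [f_equal; simpl; ring|]. f_equal. apply map_ext. intros i.
  replace (1 - Z.of_nat (S i))%Z with (- Z.of_nat i)%Z by lia.
  replace (1 - Z.of_nat i)%Z with (1 + - Z.of_nat i)%Z by lia.
  rewrite Cpowz_add by exact Ht. simpl. f_equal. ring.
Qed.

Lemma epoch_rect_neq_0 (c : C) (k : nat) :
  (forall i j, Etheta p (c * Cpowz t (1 - Z.of_nat i) * Cpow q j) <> 0) -> epoch_rect c k <> 0.
Proof. intros H. apply Cprod_map_neq_0. intros i _. now apply epochN_neq_0. Qed.

(* The last product in [W1]; its factor [E(B t^(1-2i) q^(2m)) / E(B t^(1-2i))] merges into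
   the shifted factorial. *)
Lemma W1_tail_rect (B : C) (l : nat) : (l < n)%nat ->
  (forall i, Etheta p (B * Cpowz t (1 - 2 * Z.of_nat i)) <> 0) ->
  Cprod_list (map (fun i =>
      Etheta p (B * Cpowz t (1 - 2 * Z.of_nat i) * Cpowz q (2 * part (rect l) i))
      / Etheta p (B * Cpowz t (1 - 2 * Z.of_nat i))
      * (epoch p q (B * Cpowz t (1 - 2 * Z.of_nat i)) (part (rect l) i + part (rect (S l)) (i + 1))
         / epoch p q (B * q * Cpowz t (- 2 * Z.of_nat i)) (part (rect l) i + part (rect (S l)) (i + 1)))
      * Cpowz t (Z.of_nat i * (part (rect l) i - part (rect (S l)) (i + 1))))
    (seq 1 n))
  = Cprod_list (map (fun i => epochN p q (B * Cpowz t (1 - 2 * Z.of_nat i) * q) (m + m)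
                              / epochN p q (B * q * Cpowz t (- 2 * Z.of_nat i)) (m + m)) (seq 1 l)).
Proof.
  intros Hl HE. replace n with (l + (n - l))%nat at 1 by lia.
  rewrite seq_app, map_app, Cprod_list_app, (Cprod_list_eq_1 (map _ (seq (1 + l) _))).
  - rewrite Cmult_1_r. f_equal. apply map_ext_in. intros i Hi. apply in_seq in Hi.
    rewrite !part_rect, (proj2 (Nat.leb_le i l)), (proj2 (Nat.leb_le (i + 1) (S l))) by lia.
    replace (Z.of_nat i * (Z.of_nat m - Z.of_nat m))%Z with 0%Z by lia.
    replace (2 * Z.of_nat m)%Z with (Z.of_nat (m + m)) by lia.
    replace (Z.of_nat m + Z.of_nat m)%Z with (Z.of_nat (m + m)) by lia.
    rewrite Cpowz_of_nat, !epoch_of_nat, <- epochN_shift by auto.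
    change (Cpowz t 0) with (RtoC 1). unfold Cdiv. ring.
  - intros x Hx. apply in_map_iff in Hx. destruct Hx as [i [<- Hi]]. apply in_seq in Hi.
    rewrite !part_rect, (proj2 (Nat.leb_gt i l)), (proj2 (Nat.leb_gt (i + 1) (S l))) by lia.
    replace (Z.of_nat i * (0 - 0))%Z with 0%Z by lia.
    change (2 * 0)%Z with 0%Z. change (0 + 0)%Z with 0%Z. cbn [epoch Cpowz].
    rewrite (Cmult_1_r (B * _)). field. auto.
Qed.

Definition var_factor (x : C) : C :=
  epoch p q (/ x) (Z.of_nat m) * epoch p q (a * x) (Z.of_nat m)
  / (epoch p q (q * b * x) (Z.of_nat m) * epoch p q (q * b / (a * x)) (Z.of_nat m)).

Section OneVariable.
Variable y : C.
Hypotheses (Hy : y <> 0) (Hgen : generic_at p q t a b y).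

Ltac Etheta_nonzero := eapply Hgen; [solve_monomial | lia].

Lemma bterm_neq_0 (e : Z) : bterm p q t b m e <> 0.
Proof. apply epochN_neq_0. intros j. Etheta_nonzero. Qed.

Lemma W1_rect (l : nat) : (l < n)%nat ->
  W1 p q t (a * Cpowz t (2 * Z.of_nat l)) (b * Cpowz t (Z.of_nat l)) (rect (S l)) (rect l)
     (y * Cpowz t (- Z.of_nat l)) = var_factor y * step_ratio p q t b m (S l).
Proof.
  intros Hl. unfold W1. rewrite interlace_rect by exact Hl. cbv beta iota zeta.
  rewrite Hfac_rect, length_rect, W1_tail_rect by (auto; intros; Etheta_nonzero).
  replace (Cprod_list (map _ (seq 1 l))) with (step_ratio p q t b m (S l)).
  2:{ unfold step_ratio. replace (S l - 1)%nat with l by lia.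
      f_equal. apply map_ext. intros i. unfold bterm. f_equal; f_equal.
      - replace (Z.of_nat (S l) - 2 * Z.of_nat i)%Z with (Z.of_nat l + (1 - 2 * Z.of_nat i))%Z by lia.
        rewrite Cpowz_add by exact Ht. ring.
      - replace (Z.of_nat (S l) - 1 - 2 * Z.of_nat i)%Z with (Z.of_nat l + - 2 * Z.of_nat i)%Z by lia.
        rewrite Cpowz_add by exact Ht. ring. }
  rewrite !epoch_part_rect by lia.
  set (T := Cpowz t (Z.of_nat l)).
  assert (HT : T <> 0) by now apply Cpowz_neq_0.
  assert (HT2 : Cpowz t (2 * Z.of_nat l) = T * T).
  { unfold T. rewrite <- Cpowz_add by exact Ht. f_equal. lia. }
  assert (HTinv : Cpowz t (- Z.of_nat l) = / T) by now apply Cpowz_opp.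
  rewrite HT2, HTinv.
  rewrite (epoch_rect_S_l (q * (b * T) * (y * / T)) (q * (b * T) * (y * / T) / t))
    by (field; auto).
  rewrite (epoch_rect_S_l (q * (b * T) / (a * (T * T) * (y * / T)))
             (q * (b * T) / (a * (T * T) * (y * / T) * t))) by (field; auto).
  rewrite (epoch_rect_S (/ (y * / T))), (epoch_rect_S (a * (T * T) * (y * / T))), HTinv.
  replace (/ (y * / T) * / T) with (/ y) by (field; auto).
  replace (a * (T * T) * (y * / T) * / T) with (a * y) by (field; auto).
  replace (q * (b * T) * (y * / T)) with (q * b * y) by (field; auto).
  replace (q * (b * T) / (a * (T * T) * (y * / T))) with (q * b / (a * y)) by (field; auto).
  unfold var_factor. rewrite !epoch_of_nat.
  field. repeat split.
  all: first [ apply epoch_rect_neq_0; intros; Etheta_nonzero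
             | apply epochN_neq_0; intros; Etheta_nonzero ].
Qed.

End OneVariable.

Lemma Wm_rect (xs : list C) : (length xs <= n)%nat ->
  List.Forall (fun y : C => y <> 0 /\ generic_at p q t a b y) xs ->
  Wm p q t (rect (length xs)) (repeat 0%nat n) xs a b
  = Cprod_list (map (step_ratio p q t b m) (seq 1 (length xs))) * Cprod_list (map var_factor xs).
Proof.
  induction xs as [|y zs IH]; intros Hl Hxs.
  - cbn [Wm length]. rewrite rect_0.
    destruct (list_eq_dec Nat.eq_dec (repeat 0%nat n) (repeat 0%nat n)) as [_|E]; [|now contradiction E].
    simpl. ring.
  - inversion Hxs as [|? ? [Hy Hgen] Hzs]; subst. cbn [length] in *.
    rewrite Wm_rect_cons, W1_rect, IH, Cprod_map_seq_S by (auto; lia).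
    replace (1 + length zs)%nat with (S (length zs)) by lia. simpl. ring.
Qed.

End RectangularSteps.

Definition unit_exps (r : nat) (s : Z) (len : nat) : list Z :=
  repeat 0%Z r ++ s :: repeat 0%Z (len - S r).

Lemma prod_pow_unit_exps (xs : list C) (r : nat) (s : Z) : (r < length xs)%nat ->
  Cprod_list (map (fun xz => Cpowz (fst xz) (snd xz)) (combine xs (unit_exps r s (length xs))))
  = Cpowz (nth r xs (RtoC 0)) s.
Proof.
  revert r. induction xs as [|x xs IH]; intros [|r] Hr; cbn [length] in *; try lia.
  - cbn. rewrite Nat.sub_0_r, Cprod_list_eq_1; [ring|].
    intros z Hz. apply in_map_iff in Hz. destruct Hz as [[x' e] [<- Hin]].
    apply in_combine_r, repeat_spec in Hin. now subst.
  - change (unit_exps (S r) s (S (length xs))) with (0%Z :: unit_exps r s (length xs)).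
    cbn [combine map]. change (Cprod_list (?h :: ?l)) with (h * Cprod_list l).
    rewrite IH by lia. simpl. ring.
Qed.

Lemma generic_at_of_generic (p q t a b : C) (xs : list C) (y : C) :
  generic p q t a b xs -> In y xs -> generic_at p q t a b y.
Proof.
  intros (_ & _ & _ & _ & _ & Hg) Hin l s c [i [j [k ->]]] Hls.
  destruct (In_nth xs y (RtoC 0) Hin) as [r [Hr <-]].
  specialize (Hg i j k l (unit_exps r s (length xs))).
  unfold monomial in Hg. rewrite prod_pow_unit_exps in Hg by exact Hr. apply Hg.
  - unfold unit_exps. rewrite length_app. cbn [length]. rewrite !repeat_length. lia.
  - intros (_ & _ & _ & Hl & Hs). destruct Hls as [Hl0 | Hs0]; [lia|].
    rewrite Forall_forall in Hs. apply Hs0, Hs. apply in_or_app. right. now left.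
Qed.

Theorem mainTheorem7 (p q t a b : C) (n m : nat) (x : list C) :
  (Cmod p < 1)%R -> (1 <= n)%nat -> length x = n ->
  generic p q t a b x ->
  Wpart p q t (repeat m n) x a b = rhs7 p q t a b n m x.
Proof.
  intros _ Hn Hlen Hgen. subst n.
  assert (Hvars : List.Forall (fun y : C => y <> 0 /\ generic_at p q t a b y) x).
  { apply Forall_forall. intros y Hy. split; [|exact (generic_at_of_generic _ _ _ _ _ _ _ Hgen Hy)].
    destruct Hgen as (_ & _ & _ & _ & Hx & _). rewrite Forall_forall in Hx. auto. }
  assert (Hbterm : forall e, bterm p q t b m e <> 0).
  { destruct x as [|y xs]; [simpl in Hn; lia|].
    inversion Hvars as [|? ? [Hy Hgeny]]; subst. destruct Hgen as (Hq & Ht & Ha & Hb & _).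
    apply (bterm_neq_0 p q t a b m Hq Ht Ha Hb y Hy Hgeny). }
  destruct Hgen as (Hq & Ht & Ha & Hb & _).
  unfold Wpart, rhs7. rewrite repeat_length, <- (rect_full m (length x)).
  rewrite Wm_rect, prod_step_ratio by auto.
  f_equal. unfold half_ratio, bterm. f_equal. apply map_ext. intros j.
  replace (2 * Z.of_nat m)%Z with (Z.of_nat (m + m)) by lia. now rewrite !epoch_of_nat.
Qed.
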